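(* Let $q$ be a prime power and $\mathcal{L}$ a non-empty set of lines of $\mathrm{PG}(n,q)$ satisfying (Pt), (Pl), (Sd) and (To) (see context). Let $M$ be a subspace of $\mathrm{PG}(n,q)$ and $\ell\in\mathcal{L}\setminus\mathcal{L}_M$. Let $$\mathcal{S}=\{\ell^M\in\mathcal{L}_M : \mathcal{L}_{\langle \ell^M,\ell\rangle}\cap\mathcal{L}_M=\{\ell^M\}\text{ and }\ell^M\cap\ell=\emptyset\}.$$ If $\ell^M_1\in\mathcal{S}$, then $\mathcal{L}_{\langle \ell^M_1,\ell\rangle}$ contains at least $q$ lines not in $\bigcup_{\ell^M_2\in\mathcal{S}\setminus\{\ell^M_1\}}\mathcal{L}_{\langle \ell^M_2,\ell\rangle}$.
   Context: (Pt): every point of $\mathrm{PG}(n,q)$ lies on $0$ or $q+1$ lines of $\mathcal{L}$. (Pl): every plane contains $0$, $1$ or $q+1$ lines of $\mathcal{L}$. (Sd): every solid ($3$-dimensional subspace) contains $0$, $1$, $q+1$ or $2q+1$ lines of $\mathcal{L}$. (To): $|\mathcal{L}|\le q^5+q^4+q^3+q^2+q+1$. For a subspace $W$, $\mathcal{L}_W$ denotes the set of lines of $\mathcal{L}$ contained in $W$; $\langle X,Y\rangle$ denotes the subspace spanned by $X$ and $Y$. *)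

(* PG(n,q) is modelled by the vector space 'rV[F]_(n.+1)
   over a finite field F with q = #|F| elements; subspaces of PG(n,q) are
   the subspaces {vspace 'rV[F]_n.+1} (projective dimension = \dim - 1):
   points have \dim 1, lines \dim 2, planes \dim 3, solids \dim 4. *)
From HB Require Import structures.
From mathcomp Require Import all_boot all_algebra.
Import VectorInternalTheory.

Set Implicit Arguments.
Unset Strict Implicit.
Unset Printing Implicit Defensive.

HB.instance Definition _ (F : finFieldType) (m : nat) :=
  [Countable of {vspace 'rV[F]_m} by <:].
HB.instance Definition _ (F : finFieldType) (m : nat) :=
  [Finite of {vspace 'rV[F]_m} by <:].

Notation PGsub F n := {vspace 'rV[F]_n.+1}.

Section PG.
Variables (F : finFieldType) (n : nat).
Local Notation q := #|F|.
Implicit Types (L : {set PGsub F n}) (W : PGsub F n).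

Definition LinW L W : {set PGsub F n} := [set x in L | (x <= W)%VS].

Definition all_lines L := forall l, l \in L -> \dim l = 2.

Definition cond_Pt L := forall P : PGsub F n, \dim P = 1 ->
  #|[set l in L | (P <= l)%VS]| = 0 \/ #|[set l in L | (P <= l)%VS]| = q.+1.
Definition cond_Pl L := forall W : PGsub F n, \dim W = 3 ->
  #|LinW L W| \in [:: 0; 1; q.+1].
Definition cond_Sd L := forall W : PGsub F n, \dim W = 4 ->
  #|LinW L W| \in [:: 0; 1; q.+1; (2 * q).+1].
Definition cond_To L := #|L| <= q ^ 5 + q ^ 4 + q ^ 3 + q ^ 2 + q + 1.

Definition Sset L (M l : PGsub F n) : {set PGsub F n} :=
  [set lM in LinW L M |
     (LinW L (lM + l)%VS :&: LinW L M == [set lM]) && ((lM :&: l)%VS == 0%VS)].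
End PG.

From HB Require Import structures.
From mathcomp Require Import all_boot all_algebra.
From mathcomp Require Import zify.

(* Put Σ := <l1, l>, a solid since l1 and l are skew.  A line of L in Σ that is
   skew to l spans Σ together with l, so it cannot lie in <l2, l> for another
   l2 of S (that would force l2 ∈ L_Σ ∩ L_M = {l1}); it therefore suffices to
   find q lines of L_Σ skew to l.  The lines of L_Σ other than l that meet l
   all lie in one plane through l: two distinct such planes carry q + 1 lines
   each by (Pl), sharing only l, and together with l1 would give 2q + 2 lines
   in Σ, against (Sd).  So at most q + 1 lines of L_Σ meet l, and if some line
   other than l does, |L_Σ| >= q + 2; with l1 skew to l, (Sd) then leaves at
   least q skew lines. *)

Set Implicit Arguments.
Unset Strict Implicit.
Unset Printing Implicit Defensive.

Section SubspaceDim.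
Variables (K : fieldType) (vT : vectType K).
Implicit Types U V W : {vspace vT}.

Lemma eq_subv_dim U V : (U <= V)%VS -> \dim V <= \dim U -> U = V.
Proof. by move=> sUV leVU; apply/eqP; rewrite eqEdim sUV leVU. Qed.

Lemma dimv_cap_lt U V : \dim U = \dim V -> U != V -> \dim (U :&: V) < \dim U.
Proof.
move=> dUV neUV; rewrite ltn_neqAle dimvS ?capvSl // andbT.
apply: contra neUV => /eqP dcap.
have capU : (U :&: V)%VS = U by apply: eq_subv_dim; rewrite ?capvSl ?dcap.
apply/eqP; apply: eq_subv_dim; first by rewrite -capU capvSr.
by rewrite -dUV.
Qed.

Lemma dimv_add_meet U V :
  \dim U = 2 -> \dim V = 2 -> (U :&: V != 0)%VS -> U != V -> \dim (U + V) = 3.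
Proof.
move=> dU dV meet neUV; have := dimv_sum_cap U V.
have := dimv_cap_lt (etrans dU (esym dV)) neUV.
by rewrite -dimv_eq0 in meet; rewrite dU dV; lia.
Qed.

Lemma eq_subv_cap_dim W W' U V : \dim W = \dim W' -> W != W' ->
  \dim W = (\dim U).+1 -> \dim V = \dim U ->
  (U <= W :&: W')%VS -> (V <= W :&: W')%VS -> U = V.
Proof.
move=> dWW' neWW' dWU dVU sU sV.
have ltcap := dimv_cap_lt dWW' neWW'; rewrite dWU ltnS in ltcap.
have capU : U = (W :&: W')%VS by apply: eq_subv_dim.
by rewrite capU; apply/esym/eq_subv_dim; rewrite // dVU -capU.
Qed.
End SubspaceDim.

Section LinesOfL.
Variables (F : finFieldType) (n : nat) (L : {set PGsub F n}).
Local Notation q := #|F|.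
Implicit Types W : PGsub F n.

Lemma LinWS W W' : (W <= W')%VS -> LinW L W \subset LinW L W'.
Proof.
move=> sWW'; apply/subsetP => x; rewrite !inE => /andP [-> sxW].
exact: subv_trans sWW'.
Qed.

Lemma card_LinW_plane W x y : cond_Pl L -> \dim W = 3 ->
  x \in LinW L W -> y \in LinW L W -> x != y -> #|LinW L W| = q.+1.
Proof.
move=> Pl dW xW yW nexy.
have two : 2 <= #|LinW L W|.
  have : [set x; y] \subset LinW L W by rewrite subUset !sub1set xW yW.
  by move/subset_leq_card; rewrite cards2 nexy.
by move: (Pl W dW); rewrite !inE => /or3P [] /eqP dcard; rewrite dcard in two *.
Qed.

Section Solid.
Hypotheses (lines : all_lines L) (Pl : cond_Pl L) (Sd : cond_Sd L).
Variables l l1 : PGsub F n.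
Hypotheses (lL : l \in L) (l1L : l1 \in L) (skew_l1 : (l1 :&: l)%VS = 0%VS).

Local Notation solid := (l1 + l)%VS.
Let skew_to_l := [set y : PGsub F n | (y :&: l == 0)%VS].
Let skew := LinW L solid :&: skew_to_l.
Let meeting := LinW L solid :\: skew_to_l.

Lemma dim_solid : \dim solid = 4.
Proof. by rewrite dimv_disjoint_sum // (lines l1L) (lines lL). Qed.

Lemma l1_in_solid : l1 \in LinW L solid.
Proof. by rewrite inE l1L addvSl. Qed.

Lemma skew_line_spans_solid y : y \in skew -> (y + l)%VS = solid.
Proof.
rewrite !inE => /andP [/andP [yL ysolid] /eqP skew_y].
apply: eq_subv_dim; first by rewrite subv_add ysolid addvSr.
by rewrite dim_solid dimv_disjoint_sum // (lines yL) (lines lL).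
Qed.

Section PlaneThroughL.
Variable y : PGsub F n.
Hypotheses (y_meeting : y \in meeting) (neyl : y != l).

Lemma yL_meeting : y \in L.
Proof. by move: y_meeting; rewrite !inE => /andP [_ /andP []]. Qed.

Lemma dim_plane : \dim (y + l) = 3.
Proof.
move: y_meeting; rewrite !inE => /andP [meet _].
by rewrite dimv_add_meet ?(lines yL_meeting) ?(lines lL).
Qed.

Lemma plane_sub_solid : (y + l <= solid)%VS.
Proof.
by move: y_meeting; rewrite !inE => /andP [_ /andP [_ ys]]; rewrite subv_add ys addvSr.
Qed.

Lemma card_LinW_plane_l : #|LinW L (y + l)| = q.+1.
Proof.
apply: (card_LinW_plane (x := y) (y := l) Pl dim_plane) neyl;
  by rewrite inE ?yL_meeting ?lL ?addvSl ?addvSr.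
Qed.

Lemma l1_notin_plane : l1 \notin LinW L (y + l).
Proof.
rewrite inE l1L /=; apply/negP => l1_plane.
have : \dim solid <= \dim (y + l) by apply: dimvS; rewrite subv_add l1_plane addvSr.
by rewrite dim_solid dim_plane.
Qed.
End PlaneThroughL.

Lemma meeting_lines_coplanar y y' : y \in meeting -> y != l ->
  y' \in meeting -> y' \in LinW L (y + l).
Proof.
move=> y_meeting neyl y'_meeting.
have [-> | ney'l] := eqVneq y' l; first by rewrite inE lL addvSr.
apply/contraT => y'_off.
have y'L := yL_meeting y'_meeting.
have neplanes : (y + l)%VS != (y' + l)%VS.
  by apply: contra y'_off => /eqP ->; rewrite inE y'L addvSl.
have common_l : #|LinW L (y + l) :&: LinW L (y' + l)| <= 1.
  rewrite -[X in _ <= X](cards1 l) subset_leq_card //; apply/subsetP => x.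
  rewrite !inE => /andP [/andP [xL xP] /andP [_ xP']]; apply/eqP.
  apply: (eq_subv_cap_dim (U := x) (V := l) _ neplanes);
    rewrite ?subv_cap ?xP ?xP' ?addvSr ?(lines xL) ?(lines lL) ?dim_plane //.
have two_planes_and_l1 : l1 |: (LinW L (y + l) :|: LinW L (y' + l)) \subset LinW L solid.
  by rewrite subUset sub1set l1_in_solid subUset !LinWS ?plane_sub_solid.
have := subset_leq_card two_planes_and_l1.
rewrite cardsU1 in_setU negb_or (l1_notin_plane y_meeting neyl).
rewrite (l1_notin_plane y'_meeting ney'l) cardsU.
rewrite (card_LinW_plane_l y_meeting neyl) (card_LinW_plane_l y'_meeting ney'l).
rewrite andbT add1n.
move: common_l; set c := #|_ :&: _|.
by have := Sd dim_solid; rewrite !inE => /or4P [] /eqP ->; lia.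
Qed.

Lemma q_le_card_skew : q <= #|skew|.
Proof.
have card_solid : #|LinW L solid| = #|skew| + #|meeting| by rewrite cardsID.
have skew_pos : 0 < #|skew|.
  by rewrite card_gt0; apply/set0Pn; exists l1; rewrite !inE l1L addvSl skew_l1 eqxx.
have meeting_pos : 0 < #|meeting|.
  rewrite card_gt0; apply/set0Pn; exists l.
  by rewrite !inE lL addvSr capvv -dimv_eq0 (lines lL).
have := Sd dim_solid; rewrite !inE card_solid => Sd_solid.
have [sub_l | /subsetPn [y y_meeting]] := boolP (meeting \subset [set l]).
  have := subset_leq_card sub_l; rewrite cards1 => meeting_le1.
  by case/or4P: Sd_solid => /eqP; lia.
rewrite inE => neyl.
have meeting_le : #|meeting| <= q.+1.
  rewrite -(card_LinW_plane_l y_meeting neyl) subset_leq_card //.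
  by apply/subsetP => y'; apply: meeting_lines_coplanar.
have solid_ge : q.+2 <= #|LinW L solid|.
  have : l1 |: LinW L (y + l) \subset LinW L solid.
    by rewrite subUset sub1set l1_in_solid LinWS ?plane_sub_solid.
  move/subset_leq_card; rewrite cardsU1 (l1_notin_plane y_meeting neyl).
  by rewrite (card_LinW_plane_l y_meeting neyl).
rewrite card_solid in solid_ge.
by case/or4P: Sd_solid => /eqP; lia.
Qed.

Lemma skew_line_notin_span (M y l2 : PGsub F n) :
  LinW L solid :&: LinW L M = [set l1] ->
  y \in skew -> l2 \in LinW L M -> l2 != l1 -> y \notin LinW L (l2 + l).
Proof.
move=> solid_M y_skew l2M nel2; apply/negP; rewrite inE => /andP [_ yl2].
have l2L : l2 \in L by move: l2M; rewrite inE => /andP [].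
have span_l2 : solid = (l2 + l)%VS.
  apply: eq_subv_dim; first by rewrite -(skew_line_spans_solid y_skew) subv_add yl2 addvSr.
  by have := dimv_sum_cap l2 l; rewrite dim_solid (lines l2L) (lines lL); lia.
have : l2 \in [set l1] by rewrite -solid_M inE l2M andbT span_l2 inE l2L addvSl.
by rewrite inE (negbTE nel2).
Qed.
End Solid.
End LinesOfL.

Theorem lemma6 (F : finFieldType) (n : nat) (L : {set PGsub F n})
    (M l l1 : PGsub F n) :
  all_lines L -> L != set0 ->
  cond_Pt L -> cond_Pl L -> cond_Sd L -> cond_To L ->
  l \in L -> l \notin LinW L M ->
  l1 \in Sset L M l ->
  #|F| <= #|[set x in LinW L (l1 + l)%VS |
              [forall l2 in Sset L M l :\ l1, x \notin LinW L (l2 + l)%VS]]|.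
Proof.
move=> lines _ _ Pl Sd _ lL _.
rewrite inE => /andP [l1M /andP [/eqP solid_M /eqP skew_l1]].
have l1L : l1 \in L by move: l1M; rewrite inE => /andP [].
apply: leq_trans (q_le_card_skew lines Pl Sd lL l1L skew_l1) (subset_leq_card _).
apply/subsetP => y y_skew; rewrite inE (subsetP (subsetIl _ _) _ y_skew) /=.
apply/forall_inP => l2; rewrite in_setD1 => /andP [nel2].
rewrite inE => /andP [l2M _].
exact: (skew_line_notin_span lines lL l1L skew_l1 solid_M).
Qed.
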